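(* Let $p\ge 1$, let $n_1,\dots,n_p\ge1$ and $k_s\in[n_s]$ for each $s$. Suppose there is a maximum-size non-trivially intersecting family $\mathcal{F}\subseteq \prod_{s}\binom{[n_s]}{k_s}$ which is $Q$-shifted for some $Q\subsetneq [p]$ such that $k_t>1$ for some $t\notin Q$. Then there is a maximum-size non-trivially intersecting family $\mathcal{F}'\subseteq \prod_{s}\binom{[n_s]}{k_s}$ which is shifted.
   Context: Multi-part setting: the ground set is the disjoint union $\bigsqcup_{s=1}^p [n_s]$ of $p$ parts, $[n]=\{1,\dots,n\}$. For $F_s\subseteq[n_s]$, $\bigsqcup_s F_s$ denotes the subset having $F_s$ in part $s$; $\prod_{s}\binom{[n_s]}{k_s}$ is the collection of all $\bigsqcup_s F_s$ with $|F_s|=k_s$ for all $s$. A family is intersecting if any two of its sets intersect (in some part); trivially intersecting if some element (in some part) lies in all its sets; non-trivially intersecting if intersecting but not trivially intersecting. ''Maximum-size'' means of maximum size among all non-trivially intersecting subfamilies of $\prod_{s}\binom{[n_s]}{k_s}$. Shifting: for $t\in[p]$, $1\le i<j\le n_t$ and $F=\bigsqcup_s F_s$, $S_t^{i,j}(F)=F$ if $i\in F_t$ or $j\notin F_t$, and otherwise $S_t^{i,j}(F)$ replaces $F_t$ by $(F_t\setminus\{j\})\cup\{i\}$. For a family, $S_t^{i,j}(\mathcal F)=\{S_t^{i,j}(F):F\in\mathcal F\}\cup\{F: F\in\mathcal F,\ S_t^{i,j}(F)\in\mathcal F\}$. $\mathcal F$ is $t$-shifted if $S_t^{i,j}(\mathcal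 F)=\mathcal F$ for all $1\le i<j\le n_t$, and shifted if $t$-shifted for all $t\in[p]$. A non-trivially intersecting family $\mathcal F$ is $Q$-shifted (for $Q\subseteq[p]$) if it is $s$-shifted for each $s\in Q$, and for each $s\notin Q$ there are $1\le i_s<j_s\le n_s$ such that $S_s^{i_s,j_s}(\mathcal F)$ is trivially intersecting. *)

From mathcomp Require Import all_boot.
Set Implicit Arguments. Unset Strict Implicit. Unset Printing Implicit Defensive.

(* Ground set: disjoint union of p parts; part s is [n s], encoded as 'I_(n s)
   (elements 0..n s - 1 instead of 1..n s; the order is preserved). *)
Section MultiPart.
Variables (p : nat) (n : 'I_p -> nat).

Definition ground := {s : 'I_p & 'I_(n s)}.

Definition elt (s : 'I_p) (i : 'I_(n s)) : ground := Tagged (fun s => 'I_(n s)) i.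

Definition part (F : {set ground}) (s : 'I_p) : {set 'I_(n s)} :=
  [set i | elt i \in F].

Definition in_prod (k : 'I_p -> nat) (F : {set ground}) : bool :=
  [forall s, #|part F s| == k s].

Definition family_in_prod (k : 'I_p -> nat) (A : {set {set ground}}) : bool :=
  [forall F in A, in_prod k F].

Definition intersecting (A : {set {set ground}}) : Prop :=
  forall F G, F \in A -> G \in A -> F :&: G != set0.

Definition trivially_intersecting (A : {set {set ground}}) : Prop :=
  exists x : ground, forall F, F \in A -> x \in F.

Definition nontrivially_intersecting (A : {set {set ground}}) : Prop :=
  intersecting A /\ ~ trivially_intersecting A.

Definition max_nontriv (k : 'I_p -> nat) (A : {set {set ground}}) : Prop :=
  [/\ family_in_prod k A, nontrivially_intersecting A &
      forall B : {set {set ground}}, family_in_prod k B ->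
        nontrivially_intersecting B -> #|B| <= #|A| ].

Definition shift_set (t : 'I_p) (i j : 'I_(n t)) (F : {set ground}) : {set ground} :=
  if (i \in part F t) || (j \notin part F t) then F
  else elt i |: (F :\ elt j).

Definition shift_fam (t : 'I_p) (i j : 'I_(n t)) (A : {set {set ground}})
  : {set {set ground}} :=
  [set shift_set i j F | F in A] :|: [set F in A | shift_set i j F \in A].

Definition t_shifted (t : 'I_p) (A : {set {set ground}}) : Prop :=
  forall i j : 'I_(n t), i < j -> shift_fam i j A = A.

Definition shifted (A : {set {set ground}}) : Prop :=
  forall t : 'I_p, t_shifted t A.

Definition Q_shifted (Q : {set 'I_p}) (A : {set {set ground}}) : Prop :=
  [/\ nontrivially_intersecting A,
      forall s, s \in Q -> t_shifted s A &
      forall s, s \notin Q ->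
        exists i j : 'I_(n s), i < j /\ trivially_intersecting (shift_fam i j A)].

End MultiPart.

From mathcomp Require Import all_boot perm zify.
From Stdlib Require Import Classical.
Set Implicit Arguments. Unset Strict Implicit. Unset Printing Implicit Defensive.

(* A shift S_t^{i,j} preserves the size of a family, membership in the product and the
   intersecting property, and it lowers the total index weight whenever it moves something.
   If S_t^{i,j}(A) is trivially intersecting while A is not, the common element is i, so
   every member of A meets {i, j}; relabel part t so that i and j become its two smallest
   elements u and v.  Among the maximum non-trivially intersecting families met by {u, v},
   one of least weight is shifted: a shift moving it would have to make it trivially
   intersecting.  Maximality puts every k-set containing u and v into the family (there
   are such sets since k_t > 1), which yields a member avoiding the would-be common element
   whose shift stays in the family; for the shift of v to u such a member is reached by
   walking from a member avoiding u towards one avoiding v along the other shifts, which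
   fix the family. *)

Lemma ex_minimizer (T : Type) (P : T -> Prop) (f : T -> nat) x :
  P x -> exists2 y, P y & forall z, P z -> f y <= f z.
Proof.
have [m] := ubnP (f x); elim: m x => // m IH x fxm Px.
have [[z [Pz fzx]] | nolower] := classic (exists z, P z /\ f z < f x).
  exact: IH z (leq_trans fzx fxm) Pz.
by exists x => // z Pz; rewrite leqNgt; apply/negP => fzx; apply: nolower; exists z.
Qed.

Lemma exists_set_between (T : finType) (I E : {set T}) m :
  [disjoint I & E] -> #|I| <= m -> m + #|E| <= #|T| ->
  exists X : {set T}, [/\ I \subset X, [disjoint X & E] & #|X| = m].
Proof.
move=> dIE Im mE; set C := ~: (I :|: E).
have : 0 < #|[set Y : {set T} | Y \subset C & #|Y| == m - #|I|]|.
  rewrite cards_draws bin_gt0 -(leq_add2l #|I :|: E|) cardsC.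
  by have := leq_card_setU I E; case=> + _; lia.
case/card_gt0P => Y /[!inE] /andP [YC /eqP cardY].
have [dYI dYE] : [disjoint Y & I] /\ [disjoint Y & E].
  by rewrite -disjoints_subset in YC; split; apply: disjointWr YC; rewrite ?subsetUl ?subsetUr.
exists (I :|: Y); split; first exact: subsetUl.
  by rewrite disjoints_subset subUset -!disjoints_subset dIE.
by rewrite cardsU setIC (disjoint_setI0 dYI) cards0 subn0 cardY; lia.
Qed.

Lemma card_setD_exch (T : finType) (X Y : {set T}) x y :
  x \in X -> x \notin Y -> y \in Y -> y \notin X ->
  #|X :\: (x |: (Y :\ y))| < #|X :\: Y| /\ #|(y |: (X :\ x)) :\: Y| < #|X :\: Y|.
Proof.
move=> xX xY yY yX; have xXY : x \in X :\: Y by rewrite inE xX xY.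
suff [-> ->] : X :\: (x |: (Y :\ y)) = (X :\: Y) :\ x /\ (y |: (X :\ x)) :\: Y = (X :\: Y) :\ x.
  by rewrite [#|X :\: Y|](cardsD1 x) xXY.
split; apply/setP => z; rewrite !inE.
  have [-> // | zx] := eqVneq z x.
  by have [-> | zy] := eqVneq z y; rewrite ?(negbTE yX) ?andbF.
have [-> | zy] := eqVneq z y; first by rewrite yY /= andbF.
by rewrite /= andbCA.
Qed.

Section Ground.
Variables (p : nat) (n : 'I_p -> nat).
Local Notation G := (ground n).
Implicit Types (A B : {set {set G}}) (F E : {set G}).

Lemma elt_eqE s s' (x : 'I_(n s)) (y : 'I_(n s')) :
  (elt x = elt y) <-> (s = s' /\ (x : nat) = y).
Proof.
split=> [e | [es]]; last by subst s' => /val_inj ->.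
by split; [exact: (congr1 tag e) | exact: (congr1 (fun z : G => val (tagged z)) e)].
Qed.

Lemma elt_inj s : injective (@elt p n s).
Proof. by move=> x y /elt_eqE [_ /val_inj]. Qed.

Lemma elt_neq s s' (x : 'I_(n s)) (y : 'I_(n s')) : s != s' -> (elt x == elt y) = false.
Proof. by apply: contraNF => /eqP /(congr1 tag) /= ->. Qed.

Lemma mem_part F s (i : 'I_(n s)) : (i \in part F s) = (elt i \in F).
Proof. by rewrite inE. Qed.

Lemma part_ext F E : (forall s, part F s = part E s) -> F = E.
Proof. by move=> eqFE; apply/setP => -[s i]; rewrite -!mem_part eqFE. Qed.

Lemma card_part F s : #|part F s| = #|[set z in F | tag z == s]|.
Proof.
rewrite -(card_imset _ (@elt_inj s)); apply: eq_card => z; rewrite inE.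
apply/imsetP/andP => [[y] | []]; first by rewrite inE => yF ->.
by case: z => s' y /= yF /eqP es; subst s'; exists y; rewrite ?inE.
Qed.

Lemma exists_set_of_parts (P : forall s, pred {set 'I_(n s)}) :
  (forall s, exists X, P s X) -> exists F : {set G}, forall s, P s (part F s).
Proof.
move=> exP; exists [set z : G | tagged z \in xchoose (exP (tag z))] => s.
suff -> : part [set z : G | tagged z \in xchoose (exP (tag z))] s = xchoose (exP s).
  exact: xchooseP.
by apply/setP => y; rewrite !inE.
Qed.

Lemma exists_exchange k F E : in_prod k F -> in_prod k E -> F != E ->
  exists s (c d : 'I_(n s)), [/\ elt c \in F, elt c \notin E, elt d \in E & elt d \notin F].
Proof.
move=> /forallP kF /forallP kE neFE.
have [s neFEs] : exists s, part F s != part E s.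
  apply/existsP; apply: contraNT neFE => /existsPn eqFE.
  by apply/eqP/part_ext => s; apply/eqP/negPn/eqFE.
have cardFE : #|part F s| = #|part E s| by rewrite (eqP (kF s)) (eqP (kE s)).
have [c cF cE] : exists2 c, c \in part F s & c \notin part E s.
  by apply/subsetPn; apply: contra neFEs => sFE; rewrite eqEcard sFE cardFE leqnn.
have [d dE dF] : exists2 d, d \in part E s & d \notin part F s.
  by apply/subsetPn; apply: contra neFEs => sEF; rewrite eq_sym eqEcard sEF cardFE leqnn.
by exists s, c, d; rewrite -!mem_part.
Qed.

Lemma nontrivial_avoid A x : ~ trivially_intersecting A -> exists2 F, F \in A & x \notin F.
Proof.
move=> ntA; have [/exists_inP // | /exists_inPn allx] := boolP [exists F in A, x \notin F].
by case: ntA; exists x => F /allx /negPn.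
Qed.

Lemma mem_max_nontriv k A F : max_nontriv k A -> in_prod k F -> F != set0 ->
  (forall E, E \in A -> F :&: E != set0) -> F \in A.
Proof.
case=> kA [iA ntA] maxA kF F0 FA.
have kFA : family_in_prod k (F |: A).
  by apply/forall_inP => X /setU1P [-> // | /(forall_inP kA)].
have iFA : intersecting (F |: A).
  move=> X Y /setU1P [-> | XA] /setU1P [-> | YA]; rewrite ?setIid ?FA //.
    by rewrite setIC FA.
  exact: iA.
have ntFA : ~ trivially_intersecting (F |: A).
  by case=> x FAx; apply: ntA; exists x => X XA; apply: FAx; rewrite !inE XA orbT.
have := maxA _ kFA (conj iFA ntFA).
by rewrite cardsU1; case: (F \in A); rewrite //= add1n ltnn.
Qed.

Definition meets x y A := forall F, F \in A -> (x \in F) || (y \in F).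

Definition exch s (a b : 'I_(n s)) F : {set G} := elt a |: (F :\ elt b).

Lemma part_exch s (a b : 'I_(n s)) F : part (exch a b F) s = a |: (part F s :\ b).
Proof. by apply/setP => y; rewrite !inE !(inj_eq (@elt_inj s)). Qed.

Lemma part_exch_other s s' (a b : 'I_(n s)) F :
  s' != s -> part (exch a b F) s' = part F s'.
Proof. by move=> ne; apply/setP => y; rewrite !inE !elt_neq. Qed.

Lemma in_prod_exch k s (a b : 'I_(n s)) F :
  in_prod k F -> elt b \in F -> elt a \notin F -> in_prod k (exch a b F).
Proof.
move=> /forallP kF bF aF; apply/forallP => s'.
have [-> | ne] := eqVneq s' s; last by rewrite part_exch_other.
rewrite part_exch cardsU1 in_setD1 mem_part (negbTE aF) andbF.
by rewrite -(eqP (kF s)) [#|part F s|](cardsD1 b) mem_part bF.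
Qed.

Lemma exchK s (a b : 'I_(n s)) F :
  elt a \notin F -> elt b \in F -> exch b a (exch a b F) = F.
Proof.
move=> aF bF; apply/setP => x; rewrite !inE.
have [-> // | xb] := eqVneq x (elt b).
by have [-> | xa] := eqVneq x (elt a); rewrite ?(negbTE aF).
Qed.

Section Shift.
Variables (s : 'I_p) (i j : 'I_(n s)).
Local Notation S := (shift_set i j).

Lemma shift_setE F :
  S F = if (elt i \in F) || (elt j \notin F) then F else exch i j F.
Proof. by rewrite /shift_set !mem_part. Qed.

Lemma shift_set_moved F : S F != F -> [/\ elt i \notin F, elt j \in F & S F = exch i j F].
Proof. by rewrite shift_setE; case: ifP => [_ | /norP [iF /negPn jF] _]; rewrite ?eqxx. Qed.

Lemma shift_set_idem F : S (S F) = S F.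
Proof.
have [SFF | /shift_set_moved [_ _ ->]] := eqVneq (S F) F; first by rewrite !SFF.
by rewrite shift_setE !inE eqxx.
Qed.

Lemma in_prod_shift_set k F : in_prod k F -> in_prod k (S F).
Proof.
have [-> // | /shift_set_moved [iF jF ->]] := eqVneq (S F) F.
by move=> kF; apply: in_prod_exch.
Qed.

Lemma mem_shift_set F x : x \in F -> x != elt j -> x \in S F.
Proof.
move=> xF xj; have [-> // | /shift_set_moved [_ _ ->]] := eqVneq (S F) F.
by rewrite !inE xj xF orbT.
Qed.

Lemma shift_set_mem_i F : elt j \in F -> elt i \in S F.
Proof.
move=> jF; rewrite shift_setE; case: ifPn => [/orP [// | ] | _]; first by rewrite jF.
by rewrite !inE eqxx.
Qed.

Definition shift_or_keep A F := if S F \in A then F else S F.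

Lemma shift_famE A : shift_fam i j A = [set shift_or_keep A F | F in A].
Proof.
apply/setP => X; rewrite /shift_fam !inE /shift_or_keep; apply/orP/imsetP.
- case=> [/imsetP [F FA ->] | /andP [XA SXA]]; last by exists X; rewrite ?SXA.
  have [SFA | SFA] := boolP (S F \in A); last by exists F; rewrite ?(negbTE SFA).
  by exists (S F); rewrite ?shift_set_idem ?SFA.
- case=> F FA ->; case: ifP => SFA; last by left; apply: imset_f.
  by right; rewrite FA SFA.
Qed.

Lemma shift_or_keep_inj A : {in A &, injective (shift_or_keep A)}.
Proof.
have exch_of F : F \in A -> S F \notin A -> S F = exch i j F /\ F = exch j i (S F).
  move=> FA SFA; have : S F != F by apply: contraNneq SFA => ->.
  by case/shift_set_moved => iF jF SFE; rewrite SFE exchK.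
move=> F E FA EA; rewrite /shift_or_keep.
case: ifPn => SFA; case: ifPn => SEA.
- by [].
- by move=> eFS; rewrite -eFS FA in SEA.
- by move=> eSE; rewrite eSE EA in SFA.
- by move=> eS; rewrite (exch_of F FA SFA).2 (exch_of E EA SEA).2 eS.
Qed.

Lemma card_shift_fam A : #|shift_fam i j A| = #|A|.
Proof. by rewrite shift_famE card_in_imset //; apply: shift_or_keep_inj. Qed.

Lemma shift_fam_moved A : shift_fam i j A != A -> exists2 F, F \in A & S F \notin A.
Proof.
move=> moved; have [/exists_inP // | /exists_inPn SA] := boolP [exists F in A, S F \notin A].
case/eqP: moved; rewrite shift_famE -[RHS]imset_id; apply: eq_in_imset => F FA.
by rewrite /shift_or_keep (negPn (SA F FA)).
Qed.

Lemma shift_fam_moved_lt k A : family_in_prod k A -> shift_fam i j A != A -> k s < n s.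
Proof.
move=> kA /shift_fam_moved [F FA SFA].
have : S F != F by apply: contraNneq SFA => ->.
case/shift_set_moved => iF _ _; rewrite -mem_part in iF.
have : part F s \proper [set: 'I_(n s)].
  by rewrite properT; apply: contraNneq iF => ->; rewrite inE.
by move/proper_card; rewrite cardsT card_ord (eqP (forallP (forall_inP kA F FA) s)).
Qed.

Lemma mem_shift_fam_cases A X : X \in shift_fam i j A ->
  (exists2 F, F \in A & X = S F) \/ (X \in A /\ S X \in A).
Proof.
rewrite inE => /orP [/imsetP [F FA ->] | /[!inE] /andP [XA SXA]]; last by right.
by left; exists F.
Qed.

Lemma mem_shift_fam A F : F \in A -> S F \in shift_fam i j A.
Proof. by move=> FA; rewrite inE imset_f. Qed.

Lemma mem_shift_fam_kept A F : F \in A -> S F \in A -> F \in shift_fam i j A.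
Proof. by move=> FA SFA; rewrite !inE FA SFA orbT. Qed.

Lemma mem_shift_fixed A F : shift_fam i j A = A -> F \in A -> S F \in A.
Proof. by move=> fixA FA; rewrite -fixA mem_shift_fam. Qed.

Lemma family_in_prod_shift k A : family_in_prod k A -> family_in_prod k (shift_fam i j A).
Proof.
move=> /forall_inP kA; apply/forall_inP => X /mem_shift_fam_cases [[F FA ->] | [XA _]].
  exact/in_prod_shift_set/kA.
exact: kA.
Qed.

Lemma meet_shift_set F E : F :&: E != set0 -> S F :&: S E != set0.
Proof.
case/set0Pn => x /setIP [xF xE]; apply/set0Pn.
have [xj | xj] := eqVneq x (elt j).
  by exists (elt i); rewrite inE !shift_set_mem_i -?xj.
by exists x; rewrite inE !mem_shift_set.
Qed.

Lemma meet_kept_shift_set A F E : intersecting A ->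
  F \in A -> S F \in A -> E \in A -> F :&: S E != set0.
Proof.
move=> iA FA SFA EA; have [-> | ] := eqVneq (S E) E; first exact: iA.
case/shift_set_moved => iE jE SEE.
case/set0Pn: (iA F E FA EA) => x /setIP [xF xE].
have [xj | xj] := eqVneq x (elt j); last first.
  by apply/set0Pn; exists x; rewrite inE xF mem_shift_set.
have [iF | iF] := boolP (elt i \in F).
  by apply/set0Pn; exists (elt i); rewrite inE iF shift_set_mem_i.
(* S F lies in A, so it meets E, at a point other than i and j. *)
have SFE : S F = exch i j F by rewrite shift_setE (negbTE iF) -xj xF.
case/set0Pn: (iA _ _ SFA EA) => y; rewrite inE SFE !inE.
case/andP => /orP [/eqP -> | /andP [yj yF]] yE; first by rewrite (negbTE iE) in yE.
by apply/set0Pn; exists y; rewrite inE yF mem_shift_set.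
Qed.

Lemma intersecting_shift A : intersecting A -> intersecting (shift_fam i j A).
Proof.
move=> iA X Y /mem_shift_fam_cases [[F FA ->] | [XA SXA]]
  /mem_shift_fam_cases [[E EA ->] | [YA SYA]].
- exact/meet_shift_set/iA.
- by rewrite setIC (meet_kept_shift_set iA YA SYA FA).
- exact: (meet_kept_shift_set iA XA SXA EA).
- exact: iA.
Qed.

Lemma max_nontriv_shift k A : max_nontriv k A ->
  ~ trivially_intersecting (shift_fam i j A) -> max_nontriv k (shift_fam i j A).
Proof.
case=> kA [iA _] maxA ntSA; split; last by move=> B kB ntB; rewrite card_shift_fam maxA.
  exact: family_in_prod_shift.
by split; first exact: intersecting_shift.
Qed.

Lemma trivial_shift_fam A x : ~ trivially_intersecting A ->
  (forall X, X \in shift_fam i j A -> x \in X) ->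
  (forall F, F \in A -> elt i \in S F) /\
  (forall F, F \in A -> S F \in A -> elt i \in F).
Proof.
move=> ntA allx; have [F FA xF] := nontrivial_avoid x ntA.
have xSF := allx _ (mem_shift_fam FA).
have : S F != F by apply: contraNneq xF => <-.
case/shift_set_moved => _ _ SFE; move: xSF; rewrite SFE !inE (negbTE xF) andbF orbF.
move/eqP=> xi; subst x; split=> E EA; first exact/allx/mem_shift_fam.
by move=> SEA; apply/allx/mem_shift_fam_kept.
Qed.

Lemma meets_of_trivial_shift A : ~ trivially_intersecting A ->
  trivially_intersecting (shift_fam i j A) -> meets (elt i) (elt j) A.
Proof.
move=> ntA [x /(trivial_shift_fam ntA) [Si _]] F FA.
have [SFF | /shift_set_moved [_ -> _]] := eqVneq (S F) F; last by rewrite orbT.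
by rewrite -SFF Si.
Qed.

Definition weight F := \sum_(z in F) val (tagged z).
Definition fam_weight A := \sum_(F in A) weight F.

Lemma weight_shift_set_lt F : i < j -> S F != F -> weight (S F) < weight F.
Proof.
move=> ij /shift_set_moved [iF jF ->].
have weightE : weight (exch i j F) + j = weight F + i.
  rewrite /weight big_setU1 /=; last by rewrite !inE (negbTE iF) andbF.
  by rewrite [in RHS](big_setD1 (elt j)) //= addnAC [RHS]addnAC [i + j]addnC.
by move: weightE; lia.
Qed.

Lemma weight_shift_set_le F : i < j -> weight (S F) <= weight F.
Proof.
by move=> ij; have [-> // | /(weight_shift_set_lt ij) /ltnW] := eqVneq (S F) F.
Qed.

Lemma fam_weight_shift A : i < j -> shift_fam i j A != A ->
  fam_weight (shift_fam i j A) < fam_weight A.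
Proof.
move=> ij /shift_fam_moved [F0 F0A SF0A].
rewrite /fam_weight shift_famE big_imset /=; last exact: shift_or_keep_inj.
have weight_le F : weight (shift_or_keep A F) <= weight F.
  by rewrite /shift_or_keep; case: ifP => // _; apply: weight_shift_set_le.
rewrite (bigD1 F0) //= [in X in _ < X](bigD1 F0) //= -addSn.
apply: leq_add; last by apply: leq_sum => F _.
rewrite /shift_or_keep (negbTE SF0A); apply: weight_shift_set_lt => //.
by apply: contraNneq SF0A => ->.
Qed.

End Shift.

Section Relabel.
Variables (f : G -> G) (f_inj : injective f) (f_tag : forall z, tag (f z) = tag z).

Definition relabel A : {set {set G}} := [set f @: F | F : {set G} in A].

Lemma in_prod_imset k F : in_prod k F -> in_prod k (f @: F).
Proof.
move=> /forallP kF; apply/forallP => s; apply/eqP.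
rewrite -(eqP (kF s)) !card_part -[RHS](card_imset _ f_inj); apply: eq_card => z.
rewrite inE.
apply/andP/imsetP => [[/imsetP [y yF ->] fys] | [y /[!inE] /andP [yF ys] ->]].
  by exists y; rewrite // inE yF -f_tag.
by rewrite f_tag mem_imset.
Qed.

Lemma max_nontriv_relabel k A : max_nontriv k A -> max_nontriv k (relabel A).
Proof.
case=> kA [iA ntA] maxA; split; last 1 first.
- move=> B kB ntB; rewrite card_imset; first exact: maxA.
  exact: imset_inj.
- by apply/forall_inP => _ /imsetP [F FA ->]; apply/in_prod_imset/(forall_inP kA).
split=> [_ _ /imsetP [F FA ->] /imsetP [E EA ->] | [x allx]].
  by rewrite -imsetI ?imset_eq0; [exact: iA | move=> ? ? _ _; exact: f_inj].
apply: ntA; exists (invF f_inj x) => F FA.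
by rewrite -(mem_imset _ _ f_inj) f_invF; apply/allx/imset_f.
Qed.

Lemma meets_relabel x y A : meets x y A -> meets (f x) (f y) (relabel A).
Proof. by move=> mA _ /imsetP [F FA ->]; rewrite !mem_imset //; apply: mA. Qed.

End Relabel.

Lemma tag_tperm (x y z : G) : tag x = tag y -> tag (tperm x y z) = tag z.
Proof. by case: tpermP => [-> | -> |] //. Qed.

Lemma exists_relabel t (i j o0 o1 : 'I_(n t)) : i != j -> o0 != o1 ->
  exists f : G -> G,
    [/\ injective f, forall z, tag (f z) = tag z, f (elt i) = elt o0 & f (elt j) = elt o1].
Proof.
move=> ij o01; pose g := tperm (elt i) (elt o0).
have gj_o0 : g (elt j) != elt o0.
  by rewrite -[elt o0](tpermL (elt i)) (inj_eq perm_inj) (inj_eq (@elt_inj t)) eq_sym.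
exists (tperm (g (elt j)) (elt o1) \o g); split.
- by apply: inj_comp; apply: perm_inj.
- by move=> z; rewrite /= !tag_tperm.
- by rewrite /= tpermL tpermD // (inj_eq (@elt_inj t)) eq_sym.
- by rewrite /= tpermL.
Qed.

Section TwoSmallest.
Variables (k : 'I_p -> nat) (t : 'I_p) (o0 o1 : 'I_(n t)).
Hypotheses (o0_val : o0 = 0 :> nat) (o1_val : o1 = 1 :> nat).
Hypotheses (k_t : 1 < k t) (k_le : forall s, k s <= n s).
Local Notation u := (elt o0).
Local Notation v := (elt o1).

Lemma meets_shift s (a b : 'I_(n s)) A : a < b -> meets u v A -> meets u v (shift_fam a b A).
Proof.
move=> ab mA X /mem_shift_fam_cases [[F FA ->] | [XA _]]; last exact: mA.
have [-> | /shift_set_moved [aF bF ->]] := eqVneq (shift_set a b F) F; first exact: mA.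
have bu : (u == elt b) = false by apply/eqP => /elt_eqE [_]; rewrite o0_val; lia.
rewrite !inE bu /=; case/orP: (mA F FA) => [-> | vF]; first by rewrite orbT.
have [vb | _] := eqVneq v (elt b); last by rewrite vF !orbT.
(* b is the second element of part t, so a is its first *)
case/elt_eqE: vb => ts b1; subst s.
have -> : a = o0 by apply/val_inj => /=; lia.
by rewrite eqxx.
Qed.

Lemma mem_max_nontriv_uv A F : max_nontriv k A -> meets u v A ->
  in_prod k F -> u \in F -> v \in F -> F \in A.
Proof.
move=> maxA mA kF uF vF; apply: mem_max_nontriv kF _ _ => //; first by apply/set0Pn; exists u.
by move=> E /mA /orP [uE | vE]; apply/set0Pn; [exists u | exists v]; rewrite inE ?uF ?vF.
Qed.

Lemma exists_prod_uv_avoid s (a : 'I_(n s)) : k s < n s -> elt a != u -> elt a != v ->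
  exists F, [/\ in_prod k F, u \in F, v \in F & elt a \notin F].
Proof.
move=> ks au av.
pose I s' := [set y : 'I_(n s') | (elt y == u) || (elt y == v)].
pose E s' := [set y : 'I_(n s') | elt y == elt a].
have partX s' : exists X : {set 'I_(n s')},
    [&& I s' \subset X, [disjoint X & E s'] & #|X| == k s'].
  have dIE : [disjoint I s' & E s'].
    rewrite disjoints_subset; apply/subsetP => y; rewrite !inE.
    by apply: contraL => /eqP ->; rewrite negb_or au av.
  have cardI : #|I s'| <= k s'.
    have [ts | nts] := eqVneq s' t; last first.
      by rewrite (_ : I s' = set0) ?cards0 //; apply/setP => y; rewrite !inE !elt_neq.
    subst s'; rewrite (_ : I t = [set o0; o1]) ?cards2; last first.
      by apply/setP => y; rewrite !inE !(inj_eq (@elt_inj t)).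
    by apply: leq_trans k_t; case: (o0 != o1).
  have cardE : k s' + #|E s'| <= #|'I_(n s')|.
    rewrite card_ord; have [ss | nss] := eqVneq s' s; last first.
      by rewrite (_ : E s' = set0) ?cards0 ?addn0 //; apply/setP => y; rewrite !inE elt_neq.
    subst s'; rewrite (_ : E s = [set a]) ?cards1 ?addn1 //.
    by apply/setP => y; rewrite !inE (inj_eq (@elt_inj s)).
  have [X [IX XE cardX]] := exists_set_between dIE cardI cardE.
  by exists X; rewrite IX XE cardX eqxx.
have [F partF] := exists_set_of_parts partX.
have [It _ _] := and3P (partF t).
have [_ Es _] := and3P (partF s).
exists F; split; rewrite -?mem_part.
- by apply/forallP => s'; case/and3P: (partF s').
- by apply: (subsetP It); rewrite !inE eqxx.
- by apply: (subsetP It); rewrite !inE eqxx orbT.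
- by apply/negbT/(disjointFl Es); rewrite !inE.
Qed.

Lemma shift_fam_nontrivial_other A s (a b : 'I_(n s)) :
  max_nontriv k A -> meets u v A -> a < b -> (elt a, elt b) != (u, v) ->
  shift_fam a b A != A -> ~ trivially_intersecting (shift_fam a b A).
Proof.
move=> maxA mA ab ne moved [x allx]; case: (maxA) => kA [_ ntA] _.
have [Sa keptA] := trivial_shift_fam ntA allx.
suff [F [FA aF SFA]] : exists F, [/\ F \in A, elt a \notin F & shift_set a b F \in A].
  by move: (keptA F FA SFA); rewrite (negbTE aF).
have SA F : F \in A -> u \in shift_set a b F -> v \in shift_set a b F -> shift_set a b F \in A.
  by move=> FA; apply/mem_max_nontriv_uv/in_prod_shift_set/(forall_inP kA).
have ub : u != elt b by apply/eqP => /elt_eqE [_]; rewrite o0_val; lia.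
have [auv | ] := boolP ((elt a == u) || (elt a == v)).
  have vb : v != elt b.
    have ab' : elt a != elt b by apply: contraTneq ab => /elt_inj ->; rewrite ltnn.
    apply: contra_neq ne => vb; case/orP: auv => /eqP au; first by rewrite au vb.
    by move: ab'; rewrite au vb eqxx.
  have [F FA aF] := nontrivial_avoid (elt a) ntA.
  exists F; split; rewrite // SA //.
  - have [<- | au] := eqVneq (elt a) u; first exact: Sa.
    apply: mem_shift_set ub; move: auv (mA F FA); rewrite (negbTE au) /= => /eqP <-.
    by rewrite (negbTE aF) orbF.
  - have [<- | av] := eqVneq (elt a) v; first exact: Sa.
    apply: mem_shift_set vb; move: auv (mA F FA); rewrite (negbTE av) orbF => /eqP <-.
    by rewrite (negbTE aF).
rewrite negb_or => /andP [au av].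
have vb : v != elt b.
  apply/eqP => /elt_eqE [ts b1]; subst s; case/eqP: au; congr elt.
  by apply/val_inj => /=; lia.
have [F [kF uF vF aF]] := exists_prod_uv_avoid (shift_fam_moved_lt kA moved) au av.
have FA := mem_max_nontriv_uv maxA mA kF uF vF.
by exists F; split; rewrite // SA // mem_shift_set // eq_sym.
Qed.

Definition shifted_but_uv A :=
  forall s (c d : 'I_(n s)), c < d -> (elt c, elt d) != (u, v) -> shift_fam c d A = A.

Lemma exists_uv_shiftable A : family_in_prod k A -> meets u v A -> shifted_but_uv A ->
  forall F E, F \in A -> u \notin F -> E \in A -> v \notin E ->
  exists F', [/\ F' \in A, u \notin F' & shift_set o0 o1 F' \in A].
Proof.
(* Induction on |F :\: E|: a shift other than (u, v) fixes A and moves F or E one step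
   closer to the other. *)
move=> kA mA fixA F E; have [m] := ubnP #|F :\: E|.
elim: m F E => // m IH F E ltFE FA uF EA vE.
have vF : v \in F by move: (mA F FA); rewrite (negbTE uF).
have SFE : shift_set o0 o1 F = exch o0 o1 F by rewrite shift_setE (negbTE uF) vF.
have [eqSE | neSE] := eqVneq (shift_set o0 o1 F) E; first by exists F; rewrite eqSE.
have kSF : in_prod k (shift_set o0 o1 F) by apply/in_prod_shift_set/(forall_inP kA).
have [s [c [d [cS cE dE dS]]]] := exists_exchange kSF (forall_inP kA E EA) neSE.
have uE : u \in E by move: (mA E EA); rewrite (negbTE vE) orbF.
have cu : elt c != u by apply: contraNneq cE => ->.
have dv : elt d != v by apply: contraNneq vE => <-.
rewrite SFE !inE (negbTE cu) (negbTE dv) /= in cS dS.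
have [cv cF] := andP cS; have [du dF] := norP dS.
have [ltE ltF] := card_setD_exch cF cE dE dF.
have [cd | dc | /val_inj cd] := ltngtP c d; last by rewrite cd (negbTE dF) in cF.
- have EcdA : shift_set c d E \in A.
    by apply: mem_shift_fixed EA; apply: fixA cd _; rewrite xpair_eqE (negbTE cu).
  have EcdE : shift_set c d E = exch c d E by rewrite shift_setE (negbTE cE) dE.
  apply: (IH _ _ _ FA uF EcdA).
    by rewrite EcdE; apply: leq_trans ltE ltFE.
  by rewrite EcdE !inE (eq_sym v) (negbTE cv) (negbTE vE) andbF.
- have FdcA : shift_set d c F \in A.
    by apply: mem_shift_fixed FA; apply: fixA dc _; rewrite xpair_eqE (negbTE du).
  have FdcE : shift_set d c F = exch d c F by rewrite shift_setE (negbTE dF) cF.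
  apply: (IH _ _ _ FdcA _ EA vE).
    by rewrite FdcE; apply: leq_trans ltF ltFE.
  by rewrite FdcE !inE (eq_sym u) (negbTE du) (negbTE uF) andbF.
Qed.

Lemma shift_fam_nontrivial_uv A : max_nontriv k A -> meets u v A -> shifted_but_uv A ->
  ~ trivially_intersecting (shift_fam o0 o1 A).
Proof.
move=> [kA [_ ntA] _] mA fixA [x allx].
have [_ keptA] := trivial_shift_fam ntA allx.
have [F FA uF] := nontrivial_avoid u ntA.
have [E EA vE] := nontrivial_avoid v ntA.
have [F' [F'A uF' SF'A]] := exists_uv_shiftable kA mA fixA FA uF EA vE.
by move: (keptA F' F'A SF'A); rewrite (negbTE uF').
Qed.

Lemma shifted_of_min_weight A : max_nontriv k A -> meets u v A ->
    (forall B, max_nontriv k B -> meets u v B -> fam_weight A <= fam_weight B) ->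
  shifted A.
Proof.
move=> maxA mA minA.
have fixed s (a b : 'I_(n s)) : a < b ->
    (shift_fam a b A != A -> ~ trivially_intersecting (shift_fam a b A)) ->
  shift_fam a b A = A.
  move=> ab ntS; have [// | moved] := eqVneq (shift_fam a b A) A.
  have := minA _ (max_nontriv_shift maxA (ntS moved)) (meets_shift ab mA).
  by rewrite leqNgt fam_weight_shift.
have fix_other : shifted_but_uv A.
  by move=> s a b ab ne; apply: (fixed _ _ _ ab (shift_fam_nontrivial_other maxA mA ab ne)).
move=> s a b ab; have [e | ne] := eqVneq (elt a, elt b) (u, v); last exact: fix_other.
apply: (fixed _ _ _ ab) => _; move/eqP: e; rewrite xpair_eqE.
case/andP => /eqP /elt_eqE [st a0] /eqP /elt_eqE [_ b1]; subst s.
have ea : a = o0 by apply: val_inj.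
have eb : b = o1 by apply: val_inj.
by subst a b; apply: shift_fam_nontrivial_uv.
Qed.

Lemma exists_shifted_max A : max_nontriv k A -> meets u v A ->
  exists B, max_nontriv k B /\ shifted B.
Proof.
move=> maxA mA.
have [B [maxB mB] minB] :=
  ex_minimizer (P := fun B => max_nontriv k B /\ meets u v B) fam_weight (conj maxA mA).
by exists B; split; last by apply: shifted_of_min_weight => // C maxC mC; apply: minB.
Qed.

End TwoSmallest.
End Ground.

Theorem lemma2p3 (p : nat) (n : 'I_p -> nat) (k : 'I_p -> nat) :
  1 <= p ->
  (forall s, 1 <= n s) ->
  (forall s, 1 <= k s <= n s) ->
  (exists (A : {set {set ground n}}) (Q : {set 'I_p}),
      [/\ max_nontriv k A, Q \proper [set: 'I_p], Q_shifted Q A &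
          exists t, t \notin Q /\ 1 < k t]) ->
  exists A' : {set {set ground n}}, max_nontriv k A' /\ shifted A'.
Proof.
move=> _ _ k_bnd [A [Q [maxA _ [[_ ntA] _ shiftQ] [t [tQ k_t]]]]].
have [i [j [ij trivS]]] := shiftQ t tQ.
have mA := meets_of_trivial_shift ntA trivS.
have n_t : 1 < n t by apply: leq_ltn_trans (ltn_ord j); apply: leq_ltn_trans ij.
pose o0 : 'I_(n t) := Ordinal (ltnW n_t).
pose o1 : 'I_(n t) := Ordinal n_t.
have [f [f_inj f_tag f_i f_j]] := exists_relabel (negbT (ltn_eqF ij)) (isT : o0 != o1).
have k_le s : k s <= n s by case/andP: (k_bnd s).
apply: (exists_shifted_max (o0 := o0) (o1 := o1) erefl erefl k_t k_le
  (max_nontriv_relabel f_inj f_tag maxA)).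
by rewrite -f_i -f_j; apply: meets_relabel.
Qed.
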